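(* Let $S$ be the three-vertex tree with root $a$, whose right child is $b$, where $b$ has a left child $c$ (preorder $132$), with both edges contiguous. Let $(P,e)$ be any tree pattern. Let $Q$ and $Q'$ be obtained from $S$ by attaching $(P,e)$ via a non-contiguous edge as the right subtree of the leaf $c$, respectively as the right subtree of the middle vertex $b$. Then $Q$ and $Q'$ are Wilf-equivalent.
   Context: $\mathcal{T}_n$ is the set of binary trees on $n$ vertices labeled $1,\dots,n$ by the search tree property (labels of combined trees reassigned by this property). $c_L,c_R,p$: left child, right child, parent. A tree pattern is $(P,e)$, $P\in\mathcal{T}_k$, $e\colon[k]\setminus\{\text{root}\}\to\{0,1\}$; edge $(i,p(i))$ is contiguous if $e(i)=1$, non-contiguous if $e(i)=0$. $T\in\mathcal{T}_n$ contains $(P,e)$ if there is an injection $f\colon[k]\to[n]$ such that for every non-root $i$ of $P$: if $e(i)=1$, $f(i)$ is the left (resp. right) child of $f(p(i))$ when $i$ is the left (resp. right) child of $p(i)$; if $e(i)=0$, $f(i)$ lies in the left (resp. right) subtree of $f(p(i))$. $\mathcal{T}_n(Q)$ is the set of avoiders of $Q$. $Q,Q'$ are Wilf-equivalent if $|\mathcal{T}_n(Q)|=|\mathcal{T}_n(Q')|$ for all $n\ge0$. *)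

From mathcomp Require Import all_boot.
Set Implicit Arguments. Unset Strict Implicit. Unset Printing Implicit Defensive.

(* Unlabeled binary trees; the labels 1..n are determined by the
   binary-search-tree property (in-order), so a tree in T_n is just a shape. *)
Inductive btree : Type := Leaf | Node of btree & btree.

Fixpoint bsize (t : btree) : nat :=
  match t with Leaf => 0 | Node l r => (bsize l + bsize r).+1 end.

(* Vertices are addressed by their path from the root:
   false = go to the left child, true = go to the right child. *)
Fixpoint in_tree (t : btree) (u : seq bool) : bool :=
  match t, u with
  | Leaf, _ => false
  | Node _ _, [::] => true
  | Node l r, b :: u' => in_tree (if b then r else l) u'
  end.

(* A tree pattern (P, e): e u is the label of the edge from the non-root
   vertex at address u to its parent (true = contiguous, false = non-contiguous).
   Values of e at the root / non-vertices are irrelevant. *)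
Record pattern := Pattern { pat_tree : btree; pat_edge : seq bool -> bool }.

Definition contains (T : btree) (Q : pattern) : Prop :=
  exists f : seq bool -> seq bool,
    {in in_tree (pat_tree Q) &, injective f} /\
    (forall u, in_tree (pat_tree Q) u -> in_tree T (f u)) /\
    (forall u b, in_tree (pat_tree Q) (rcons u b) ->
       if pat_edge Q (rcons u b) then f (rcons u b) = rcons (f u) b
       else exists s, f (rcons u b) = f u ++ b :: s).

Definition avoiders (Q : pattern) (n : nat) : Type :=
  {T : btree | bsize T = n /\ ~ contains T Q}.

Definition wilf_equiv (Q Q' : pattern) : Prop :=
  forall n, exists f : avoiders Q n -> avoiders Q' n, bijective f.

(* S: root a, right child b, b has left child c; both edges contiguous.
   Q_leaf: (P,e) attached by a non-contiguous edge as right subtree of c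
   (address [:: true; false; true] for the root of P). *)
Definition attach_leaf (P : pattern) : pattern :=
  Pattern (Node Leaf (Node (Node Leaf (pat_tree P)) Leaf))
    (fun u => if take 3 u == [:: true; false; true]
              then (if size u == 3 then false else pat_edge P (drop 3 u))
              else true).

(* Q_mid: (P,e) attached by a non-contiguous edge as right subtree of b
   (address [:: true; true] for the root of P). *)
Definition attach_mid (P : pattern) : pattern :=
  Pattern (Node Leaf (Node (Node Leaf Leaf) (pat_tree P)))
    (fun u => if take 2 u == [:: true; true]
              then (if size u == 2 then false else pat_edge P (drop 2 u))
              else true).

From mathcomp Require Import all_boot zify.
From Stdlib Require Import ProofIrrelevance.

Set Implicit Arguments.
Unset Strict Implicit.
Unset Printing Implicit Defensive.

(* A contiguous skeleton can only embed rigidly, so T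
   contains such a pattern iff at some vertex of T the skeleton fits and P
   occurs anywhere in the subtree at the graft position: for attach_leaf P this
   is the right subtree of c, for attach_mid P the right subtree of b.  The
   bijection exchanges, at every right child b having a left child c, the right
   subtrees of b and of c, and recurses everywhere except into the old right
   subtree of c.  That subtree, the host of P, thus moves untransformed to the
   place where attach_mid P looks for P; an occurrence lying inside it is
   harmless, because it already puts P inside that subtree. *)

Lemma catI (T : Type) (s : seq T) : injective (cat s).
Proof. by elim: s => //= x s IH t1 t2 [] /IH. Qed.

(* [sub t x] is Leaf when x is not a vertex of t. *)
Fixpoint sub (t : btree) (x : seq bool) {struct x} : btree :=
  if x is b :: x' then
    (if t is Node l r then sub (if b then r else l) x' else Leaf)
  else t.

Lemma in_tree_sub t x u : in_tree (sub t x) u = in_tree t (x ++ u).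
Proof. by elim: x t => [|b x IH] [|l r] //=; case: u. Qed.

Lemma in_tree_catl t u w : in_tree t (u ++ w) -> in_tree t u.
Proof. by elim: u t => [|b u IH] [|l r] //=; apply: IH. Qed.

Lemma in_tree_rcons t u b : in_tree t (rcons u b) -> in_tree t u.
Proof. by rewrite -cats1; apply: in_tree_catl. Qed.

Definition embeds (Q : pattern) (T : btree) (f : seq bool -> seq bool) : Prop :=
  {in in_tree (pat_tree Q) &, injective f} /\
  (forall u, in_tree (pat_tree Q) u -> in_tree T (f u)) /\
  (forall u b, in_tree (pat_tree Q) (rcons u b) ->
     if pat_edge Q (rcons u b) then f (rcons u b) = rcons (f u) b
     else exists s, f (rcons u b) = f u ++ b :: s).

Definition contains_at_root (T : btree) (Q : pattern) : Prop :=
  exists2 f, embeds Q T f & f [::] = [::].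

Section Embeddings.

Variable Q : pattern.

Lemma embeds_eq_in T f g :
  {in in_tree (pat_tree Q), f =1 g} -> embeds Q T f -> embeds Q T g.
Proof.
move=> fg [finj [fT fe]]; split; [|split].
- by move=> u v hu hv; rewrite -!fg //; apply: finj.
- by move=> u hu; rewrite -fg // fT.
- by move=> u b hub; rewrite -!fg //; [apply: fe | apply: in_tree_rcons hub].
Qed.

Lemma embeds_catE T x g :
  embeds Q T (fun u => x ++ g u) <-> embeds Q (sub T x) g.
Proof.
split=> [] [ginj [gT ge]]; split; [| split | | split].
- by move=> u v hu hv /(congr1 (cat x)); apply: ginj.
- by move=> u /gT; rewrite in_tree_sub.
- move=> u b /ge; case: pat_edge; first by rewrite rcons_cat => /catI.
  by case=> s; rewrite -catA => /catI ->; exists s.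
- by move=> u v hu hv /catI; apply: ginj.
- by move=> u /gT; rewrite in_tree_sub.
- move=> u b /ge; case: pat_edge => [-> | [s ->]]; first by rewrite rcons_cat.
  by exists s; rewrite catA.
Qed.

Lemma contains_sub T x : contains (sub T x) Q -> contains T Q.
Proof. by case=> g /embeds_catE; exists (fun u => x ++ g u). Qed.

Lemma embeds_prefix T f u w :
  embeds Q T f -> in_tree (pat_tree Q) (u ++ w) -> exists s, f (u ++ w) = f u ++ s.
Proof.
move=> [_ [_ fe]]; elim/last_ind: w => [|w b IH]; first by exists [::]; rewrite !cats0.
rewrite -rcons_cat => /[dup] /in_tree_rcons /IH [s fs] /fe.
case: pat_edge => [-> | [s' ->]]; rewrite fs.
- by exists (rcons s b); rewrite rcons_cat.
- by exists (s ++ b :: s'); rewrite catA.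
Qed.

Lemma containsE T : contains T Q <-> exists x, contains_at_root (sub T x) Q.
Proof.
split=> [[f hf] | [x [g /embeds_catE hg _]]]; last by exists (fun u => x ++ g u).
set x := f [::]; exists x, (fun u => drop (size x) (f u)); last by rewrite drop_size.
have fx u : in_tree (pat_tree Q) u -> f u = x ++ drop (size x) (f u).
  by move=> hu; have [s ->] := @embeds_prefix _ _ [::] _ hf hu; rewrite drop_size_cat.
by apply/embeds_catE; apply: embeds_eq_in hf.
Qed.

Lemma embeds_restrict P T f a :
  (forall w, in_tree (pat_tree Q) (a ++ w) = in_tree (pat_tree P) w) ->
  (forall w b, pat_edge Q (a ++ rcons w b) = pat_edge P (rcons w b)) ->
  embeds Q T f -> embeds P T (fun w => f (a ++ w)).
Proof.
move=> PQ eQP [finj [fT fe]]; split; [|split].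
- have PQ' w : in_tree (pat_tree P) w -> in_tree (pat_tree Q) (a ++ w) by rewrite PQ.
  by move=> v w hv hw /(finj _ _ (PQ' v hv) (PQ' w hw)) /catI.
- by move=> w hw; apply: fT; rewrite PQ.
- by move=> w b; rewrite -PQ -eQP -rcons_cat; apply: fe.
Qed.

End Embeddings.

Fixpoint graft_tree (K : btree) (a : seq bool) (t : btree) : btree :=
  match K, a with
  | _, [::] => t
  | Node l r, false :: a' => Node (graft_tree l a' t) r
  | Node l r, true :: a' => Node l (graft_tree r a' t)
  | Leaf, _ :: _ => Leaf
  end.

Definition graft (K : btree) (a : seq bool) (P : pattern) : pattern :=
  Pattern (graft_tree K a (pat_tree P))
    (fun u => if take (size a) u == a
              then (if size u == size a then false else pat_edge P (drop (size a) u))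
              else true).

Lemma in_tree_graft K c b t u :
  in_tree K c -> ~~ in_tree K (rcons c b) ->
  in_tree (graft_tree K (rcons c b) t) u =
  in_tree K u || (take (size (rcons c b)) u == rcons c b) &&
                 in_tree t (drop (size (rcons c b)) u).
Proof.
elim: c K u => [|b' c IH] [|l r] [|b'' u] Kc Ka //=; rewrite ?take0 ?drop0.
- by case: b Ka.
- by move: Ka; case: b; case: b'' => /=; [case: r Kc | | | case: l Kc] => //=; rewrite orbF.
- by case: b' Kc Ka.
- by move: Kc Ka; case: b'; case: b'' => /= Kc Ka; rewrite ?IH ?orbF.
Qed.

Section Graft.

Variables (K : btree) (c : seq bool) (b : bool) (P : pattern).
Hypotheses (Kc : in_tree K c) (Ka : ~~ in_tree K (rcons c b)).

Local Notation a := (rcons c b).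
Local Notation k := (size (rcons c b)).
Local Notation Q := (graft K (rcons c b) P).

Lemma take_skel_neq u : in_tree K u -> take k u != a.
Proof.
rewrite -{1}(cat_take_drop k u) => /in_tree_catl Ku.
by apply: contraNneq Ka => <-.
Qed.

Lemma in_tree_graft_skel u : in_tree K u -> in_tree (pat_tree Q) u.
Proof. by rewrite /= in_tree_graft // => ->. Qed.

Lemma in_tree_graft_cat w : in_tree (pat_tree Q) (a ++ w) = in_tree (pat_tree P) w.
Proof.
rewrite /= in_tree_graft // take_size_cat // drop_size_cat // eqxx.
by rewrite (negbTE (contra (@in_tree_catl _ _ _) Ka)).
Qed.

Lemma in_tree_graftP u :
  in_tree (pat_tree Q) u -> in_tree K u \/ exists2 w, u = a ++ w & in_tree (pat_tree P) w.
Proof.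
rewrite /= in_tree_graft // => /orP [Ku | /andP [/eqP ua Pw]]; first by left.
by right; exists (drop k u); rewrite // -{1}(cat_take_drop k u) ua.
Qed.

Lemma edge_graft_skel u : in_tree K u -> pat_edge Q u = true.
Proof. by move=> /take_skel_neq /negbTE /= ->. Qed.

Lemma edge_graft_root : pat_edge Q a = false.
Proof. by rewrite /= take_size !eqxx. Qed.

Lemma edge_graft_cat w b' : pat_edge Q (a ++ rcons w b') = pat_edge P (rcons w b').
Proof.
rewrite /= take_size_cat // drop_size_cat // eqxx size_cat.
by rewrite -[X in _ == X]addn0 eqn_add2l size_rcons.
Qed.

Lemma embeds_graft_skel Y g :
  embeds Q Y g -> g [::] = [::] -> forall u, in_tree K u -> g u = u.
Proof.
move=> [_ [_ ge]] g0; elim/last_ind => [|u b' IH] // Kub.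
have := ge u b' (in_tree_graft_skel Kub).
by rewrite edge_graft_skel // IH //; apply: in_tree_rcons Kub.
Qed.

Definition graft_map (h : seq bool -> seq bool) (u : seq bool) : seq bool :=
  if take k u == a then a ++ h (drop k u) else u.

Lemma graft_map_skel h u : in_tree K u -> graft_map h u = u.
Proof. by move=> /take_skel_neq /negbTE; rewrite /graft_map => ->. Qed.

Lemma graft_map_cat h w : graft_map h (a ++ w) = a ++ h w.
Proof. by rewrite /graft_map take_size_cat // drop_size_cat // eqxx. Qed.

Lemma embeds_graft Y h :
  (forall u, in_tree K u -> in_tree Y u) -> embeds P (sub Y a) h ->
  embeds Q Y (graft_map h).
Proof.
move=> KY [hinj [hT he]]; split; [|split].
- move=> u1 u2 /in_tree_graftP [K1 | [w1 -> P1]] /in_tree_graftP [K2 | [w2 -> P2]].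
  + by rewrite !graft_map_skel.
  + rewrite (graft_map_skel _ K1) graft_map_cat => u1a; move: K1 Ka.
    by rewrite u1a => /in_tree_catl ->.
  + rewrite (graft_map_skel _ K2) graft_map_cat => au2; move: K2 Ka.
    by rewrite -au2 => /in_tree_catl ->.
  + by rewrite !graft_map_cat => /catI /hinj ->.
- move=> u /in_tree_graftP [Ku | [w -> Pw]]; first by rewrite graft_map_skel // KY.
  by rewrite graft_map_cat -in_tree_sub hT.
- move=> u b' /in_tree_graftP [Kub | [w ubw Pw]].
  + rewrite edge_graft_skel // !graft_map_skel //; apply: in_tree_rcons Kub.
  + case/lastP: w ubw Pw => [|w b''].
      rewrite cats0 => ubw _; move: (ubw) => /rcons_inj [-> ->].
      rewrite edge_graft_root (graft_map_skel _ Kc); exists (h [::]).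
      by have := graft_map_cat h [::]; rewrite cats0 cat_rcons.
    rewrite -rcons_cat => /rcons_inj [-> ->] Pw.
    rewrite rcons_cat edge_graft_cat !graft_map_cat.
    have := he w b'' Pw; case: pat_edge => [-> | [s ->]]; first by rewrite rcons_cat.
    by exists s; rewrite catA.
Qed.

Lemma contains_at_root_graft Y :
  contains_at_root Y Q <->
  (forall u, in_tree K u -> in_tree Y u) /\ contains (sub Y a) P.
Proof.
split=> [[g hg g0] | [KY [h hh]]]; last first.
  by exists (graft_map h); [apply: embeds_graft | rewrite graft_map_skel //; case: K Kc].
have gK := embeds_graft_skel hg g0.
have [_ [gT ge]] := hg.
split=> [u Ku | ]; first by rewrite -(gK u Ku) gT // in_tree_graft_skel.
have ga w : in_tree (pat_tree P) w -> g (a ++ w) = a ++ drop k (g (a ++ w)).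
  move=> Pw; have Qa : in_tree (pat_tree Q) a.
    by have := in_tree_graft_cat [::]; rewrite cats0 => ->; case: (pat_tree P) Pw.
  have := ge c b Qa; rewrite edge_graft_root (gK c Kc) => -[s gs].
  have [|s' ->] := embeds_prefix hg (_ : in_tree (pat_tree Q) (a ++ w)).
    by rewrite in_tree_graft_cat.
  by rewrite gs -cat_rcons -catA drop_size_cat.
exists (fun w => drop k (g (a ++ w))); apply/embeds_catE; apply: embeds_eq_in ga _.
by apply: embeds_restrict hg; [apply: in_tree_graft_cat | apply: edge_graft_cat].
Qed.

End Graft.

Fixpoint somewhere (p : btree -> Prop) (T : btree) : Prop :=
  if T is Node L R then p T \/ somewhere p L \/ somewhere p R else False.

Lemma somewhereP (p : btree -> Prop) T :
  ~ p Leaf -> (exists x, p (sub T x)) <-> somewhere p T.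
Proof.
move=> pL; elim: T => [|L IHL R IHR] /=; first by split=> // -[[|? ?] /pL].
split=> [[[|[] x] px] | [pT | [/IHL [x px] | /IHR [x px]]]].
- by left.
- by right; right; apply/IHR; exists x.
- by right; left; apply/IHL; exists x.
- by exists [::].
- by exists (false :: x).
- by exists (true :: x).
Qed.

Lemma somewhere_contains (p : btree -> Prop) P T :
  (forall Y, p Y -> contains Y P) -> somewhere p T -> contains T P.
Proof.
move=> pP; elim: T => [|L IHL R IHR] //= [/pP // | [/IHL | /IHR]].
- exact: (@contains_sub _ (Node L R) [:: false]).
- exact: (@contains_sub _ (Node L R) [:: true]).
Qed.

Definition tree132 : btree := Node Leaf (Node (Node Leaf Leaf) Leaf).

Lemma attach_leafE P : attach_leaf P = graft tree132 (rcons [:: true; false] true) P.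
Proof. by []. Qed.

Lemma attach_midE P : attach_mid P = graft tree132 (rcons [:: true] true) P.
Proof. by []. Qed.

Definition occ_leaf (P : pattern) (Y : btree) : Prop :=
  if Y is Node _ (Node (Node _ Z) _) then contains Z P else False.

Definition occ_mid (P : pattern) (Y : btree) : Prop :=
  if Y is Node _ (Node (Node _ _) Z) then contains Z P else False.

Lemma tree132_incl Y :
  (forall u, in_tree tree132 u -> in_tree Y u) <-> in_tree Y [:: true; false].
Proof.
split=> [incl | Y10]; first exact: incl.
case=> [|[] [|[] [|[] ?]]] //= _.
- exact: (@in_tree_catl _ [::] [:: true; false]).
- exact: (@in_tree_catl _ [:: true] [:: false]).
Qed.

Lemma contains_at_root_leaf P Y : contains_at_root Y (attach_leaf P) <-> occ_leaf P Y.
Proof.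
rewrite attach_leafE contains_at_root_graft // tree132_incl.
by case: Y => [|? [|[|? ?] ?]]; split=> [[] | ].
Qed.

Lemma contains_at_root_mid P Y : contains_at_root Y (attach_mid P) <-> occ_mid P Y.
Proof.
rewrite attach_midE contains_at_root_graft // tree132_incl.
by case: Y => [|? [|[|? ?] ?]]; split=> [[] | ].
Qed.

Lemma contains_attach_leaf P T : contains T (attach_leaf P) <-> somewhere (occ_leaf P) T.
Proof.
rewrite containsE -somewhereP //.
by split=> -[x /contains_at_root_leaf]; exists x.
Qed.

Lemma contains_attach_mid P T : contains T (attach_mid P) <-> somewhere (occ_mid P) T.
Proof.
rewrite containsE -somewhereP //.
by split=> -[x /contains_at_root_mid]; exists x.
Qed.

Lemma occ_leaf_contains P L Y : occ_leaf P (Node L Y) -> contains Y P.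
Proof.
by case: Y => [|[|Y1 Z] R] //; apply: (@contains_sub _ (Node (Node Y1 Z) R) [:: false; true]).
Qed.

Lemma occ_mid_contains P L Y : occ_mid P (Node L Y) -> contains Y P.
Proof.
by case: Y => [|[|Y1 Y2] Z] //; apply: (@contains_sub _ (Node (Node Y1 Y2) Z) [:: true]).
Qed.

Lemma somewhere_occ_leaf_contains P Y : somewhere (occ_leaf P) Y -> contains Y P.
Proof.
apply: somewhere_contains => -[|L Y'] // /occ_leaf_contains.
exact: (@contains_sub _ (Node L Y') [:: true]).
Qed.

Lemma somewhere_occ_mid_contains P Y : somewhere (occ_mid P) Y -> contains Y P.
Proof.
apply: somewhere_contains => -[|L Y'] // /occ_mid_contains.
exact: (@contains_sub _ (Node L Y') [:: true]).
Qed.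

Lemma btree_grand_ind (Pr : btree -> Prop) :
  Pr Leaf ->
  (forall R, Pr R -> Pr (Node Leaf R)) ->
  (forall l1 l2 R, Pr l1 -> Pr l2 -> Pr R -> Pr (Node (Node l1 l2) R)) ->
  forall T, Pr T.
Proof.
move=> PrL PrLR PrN T.
suff [] : Pr T /\ forall l1 l2, T = Node l1 l2 -> Pr l1 /\ Pr l2 by [].
elim: T => [|L [PL subL] R [PR _]]; first by [].
split=> [|_ _ [<- <-] //]; case: L PL subL => [|l1 l2] PL subL; first exact: PrLR.
by have [P1 P2] := subL l1 l2 erefl; apply: PrN.
Qed.

(* The [_r] maps act on right children, where the exchange happens. *)
Fixpoint leaf_to_mid (t : btree) : btree :=
  if t is Node l r then Node (leaf_to_mid l) (leaf_to_mid_r r) else Leaf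
with leaf_to_mid_r (t : btree) : btree :=
  match t with
  | Node (Node l1 l2) r => Node (Node (leaf_to_mid l1) (leaf_to_mid_r r)) l2
  | Node Leaf r => Node Leaf (leaf_to_mid_r r)
  | Leaf => Leaf
  end.

Fixpoint mid_to_leaf (t : btree) : btree :=
  if t is Node l r then Node (mid_to_leaf l) (mid_to_leaf_r r) else Leaf
with mid_to_leaf_r (t : btree) : btree :=
  match t with
  | Node (Node l1 l2) r => Node (Node (mid_to_leaf l1) r) (mid_to_leaf_r l2)
  | Node Leaf r => Node Leaf (mid_to_leaf_r r)
  | Leaf => Leaf
  end.

Lemma leaf_to_midK T :
  mid_to_leaf (leaf_to_mid T) = T /\ mid_to_leaf_r (leaf_to_mid_r T) = T.
Proof.
elim/btree_grand_ind: T => [|R [_ IHR] | l1 l2 R [IH1 _] [_ IH2] [_ IHR]] //=.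
  by rewrite IHR.
by rewrite IH1 IH2 IHR.
Qed.

Lemma mid_to_leafK T :
  leaf_to_mid (mid_to_leaf T) = T /\ leaf_to_mid_r (mid_to_leaf_r T) = T.
Proof.
elim/btree_grand_ind: T => [|R [_ IHR] | l1 l2 R [IH1 _] [_ IH2] [_ IHR]] //=.
  by rewrite IHR.
by rewrite IH1 IH2 IHR.
Qed.

Lemma bsize_leaf_to_mid T :
  bsize (leaf_to_mid T) = bsize T /\ bsize (leaf_to_mid_r T) = bsize T.
Proof.
elim/btree_grand_ind: T => [|R [_ IHR] | l1 l2 R [IH1 _] [_ IH2] [_ IHR]] //=.
  by rewrite IHR.
rewrite IH1 IH2 IHR; split=> //; lia.
Qed.

Lemma somewhere_leaf_to_mid P T :
  (somewhere (occ_leaf P) T <-> somewhere (occ_mid P) (leaf_to_mid T)) /\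
  (somewhere (occ_leaf P) T \/ occ_leaf P (Node Leaf T) <->
   somewhere (occ_mid P) (leaf_to_mid_r T) \/ occ_mid P (Node Leaf (leaf_to_mid_r T))).
Proof.
elim/btree_grand_ind: T => [|R [_ IHR] | l1 l2 R [IH1 _] [_ IH2] [_ IHR]] /=; try tauto.
(* l2 is moved untransformed: any occurrence in it already puts P in l2. *)
have leaf_l2 := @occ_leaf_contains P l1 l2.
have mid_l2 := @occ_mid_contains P l1 l2.
have sw_leaf_l2 := @somewhere_occ_leaf_contains P l2.
have sw_mid_l2 := @somewhere_occ_mid_contains P l2.
simpl in *; tauto.
Qed.

Lemma contains_leaf_to_mid P T :
  contains T (attach_leaf P) <-> contains (leaf_to_mid T) (attach_mid P).
Proof.
rewrite contains_attach_leaf contains_attach_mid.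
exact: (somewhere_leaf_to_mid P T).1.
Qed.

Lemma wilf_equiv_bij (Q Q' : pattern) (f g : btree -> btree) :
  cancel f g -> cancel g f -> (forall T, bsize (f T) = bsize T) ->
  (forall T, contains T Q <-> contains (f T) Q') -> wilf_equiv Q Q'.
Proof.
move=> fK gK fsize fQ n.
have gsize T : bsize (g T) = bsize T by rewrite -{2}(gK T) fsize.
have avoid_f T : bsize T = n /\ ~ contains T Q -> bsize (f T) = n /\ ~ contains (f T) Q'.
  by rewrite fsize -fQ.
have avoid_g T : bsize T = n /\ ~ contains T Q' -> bsize (g T) = n /\ ~ contains (g T) Q.
  by rewrite gsize fQ gK.
exists (fun X => exist _ (f (sval X)) (avoid_f _ (svalP X))).
exists (fun X => exist _ (g (sval X)) (avoid_g _ (svalP X))).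
- by case=> T hT; apply: subset_eq_compat; apply: fK.
- by case=> T hT; apply: subset_eq_compat; apply: gK.
Qed.

Theorem lemma21 (P : pattern) (hP : pat_tree P <> Leaf) :
  wilf_equiv (attach_leaf P) (attach_mid P).
Proof.
apply: (wilf_equiv_bij (f := leaf_to_mid) (g := mid_to_leaf)).
- by move=> T; case: (leaf_to_midK T).
- by move=> T; case: (mid_to_leafK T).
- by move=> T; case: (bsize_leaf_to_mid T).
- exact: contains_leaf_to_mid.
Qed.
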